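(* The short exact sequence $1\to K\to G_2\xrightarrow{\phi}S_8\to1$ is split, i.e. there is a subgroup $H\subseteq G_2$ such that $\phi|_H:H\to S_8$ is an isomorphism.
   Context: The $2\times2\times2$ Rubik's cube consists of 8 corner cubelets, each carrying 3 colored stickers. Corner positions are numbered 1 = top-front-left, 2 = top-front-right, 3 = top-back-left, 4 = top-back-right, 5 = bottom-front-left, 6 = bottom-front-right, 7 = bottom-back-left, 8 = bottom-back-right. $G_2$ is the subgroup of the symmetric group on the 24 stickers generated by the six moves $u,d,f,b,l,r$ rotating respectively the top, bottom, front, back, left, right layer of four cubelets by $90^\circ$ clockwise as seen from outside facing that face. $\phi:G_2\to S_8$ is the (surjective) homomorphism recording the permutation of corner positions, and $K=\ker\phi$. *)

From mathcomp Require Import all_boot all_fingroup.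
Set Implicit Arguments.
Local Open Scope group_scope. Unset Strict Implicit. Unset Printing Implicit Defensive.

(* Geometry: x axis points left->right, y axis bottom->top, z axis back->front.
   A corner position is described by three booleans: its coordinate on each
   axis is positive (true) or negative (false).
   Corner positions are 'I_8, with (paper's number) - 1 =
        4 * [bottom] + 2 * [back] + [right]
   so 0 = top-front-left, 1 = top-front-right, 2 = top-back-left,
   3 = top-back-right, 4 = bottom-front-left, 5 = bottom-front-right,
   6 = bottom-back-left, 7 = bottom-back-right. *)
Definition corner := 'I_8.

(* i mod n.+1 as an element of 'I_n.+1 (computes by vm_compute, unlike inord) *)
Definition ordm (n i : nat) : 'I_n.+1 := Ordinal (ltn_pmod i (ltn0Sn n)).

(* coordinate of corner c on axis k (0 = x, 1 = y, 2 = z): true = positive *)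
Definition coord (c : corner) (k : 'I_3) : bool :=
  match val k with
  | 0 => odd c
  | 1 => c < 4
  | _ => ~~ odd (c %/ 2)
  end.

Definition corner_of (px py pz : bool) : corner :=
  ordm 7 (4 * ~~ py + 2 * ~~ pz + px).

(* A sticker is a pair (c, k): the sticker at corner position c lying on the
   face perpendicular to axis k (the face of sign coord c k on that axis). *)
Definition sticker := (corner * 'I_3)%type.

Definition nxt (k : 'I_3) : 'I_3 := ordm 2 (val k).+1.

(* Quarter turn of the layer {c | coord c a = s}, clockwise as seen from
   outside the face with outward normal (s ? +e_a : -e_a).  Clockwise seen
   from outside = rotation by -90 degrees about the outward normal, i.e.
   by -90 degrees about e_a if s, by +90 degrees about e_a otherwise.
   With (a,i,j) cyclic: +90 about e_a maps (p_i,p_j) to (-p_j,p_i),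
   -90 about e_a maps (p_i,p_j) to (p_j,-p_i); sticker axes i and j swap. *)
Definition turn_fun (a : 'I_3) (s : bool) (st : sticker) : sticker :=
  let: (c, k) := st in
  if coord c a != s then st else
  let i := nxt a in let j := nxt i in
  let pi := coord c i in let pj := coord c j in
  let pi' := if s then pj else ~~ pj in
  let pj' := if s then ~~ pi else pi in
  let p (m : 'I_3) := if m == a then s else if m == i then pi' else pj' in
  let c' := corner_of (p (ordm 2 0)) (p (ordm 2 1)) (p (ordm 2 2)) in
  let k' := if k == i then j else if k == j then i else a in
  (c', k').

Definition sticker_list : seq sticker :=
  [seq (ordm 7 c, ordm 2 k) | c <- iota 0 8, k <- iota 0 3].

Lemma turn_fun4_all :
  all (fun a => all (fun s => all (fun x =>
     turn_fun a s (turn_fun a s (turn_fun a s (turn_fun a s x))) == x)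
     sticker_list) [:: true; false]) [seq ordm 2 a | a <- iota 0 3].
Proof. by vm_compute. Qed.

Lemma turn_fun_inj a s : injective (turn_fun a s).
Proof.
apply: (@can_inj _ _ _ (fun x => turn_fun a s (turn_fun a s (turn_fun a s x)))).
case=> c k; apply/eqP.
have Ha : a \in [seq ordm 2 a | a <- iota 0 3].
  apply/mapP; exists (val a); first by rewrite mem_iota /= ltn_ord.
  by apply: val_inj; rewrite /= modn_small.
move/allP: turn_fun4_all => /(_ a Ha)/allP/(_ s).
rewrite !inE; case: s => /(_ isT)/allP; apply;
  apply/allpairsP; exists (val c, val k); rewrite !mem_iota /= !ltn_ord;
  split=> //; congr pair; apply: val_inj; by rewrite /= modn_small ?ltn_ord.
Qed.

Definition turn a s : {perm sticker} := perm (@turn_fun_inj a s).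

Definition ax_x : 'I_3 := ordm 2 0.
Definition ax_y : 'I_3 := ordm 2 1.
Definition ax_z : 'I_3 := ordm 2 2.

Definition mv_u := turn ax_y true.
Definition mv_d := turn ax_y false.
Definition mv_f := turn ax_z true.
Definition mv_b := turn ax_z false.
Definition mv_l := turn ax_x false.
Definition mv_r := turn ax_x true.

Definition G2 : {set {perm sticker}} :=
  <<[set mv_u; mv_d; mv_f; mv_b; mv_l; mv_r]>>.

(* For g in G_2 this is a permutation;
   for arbitrary permutations of the stickers we default to 1. *)
Definition phi_fun (g : {perm sticker}) (c : corner) : corner := (g (c, ord0)).1.

Definition phi (g : {perm sticker}) : {perm corner} :=
  match boolP (injectiveb (phi_fun g)) with
  | AltTrue h => perm (injectiveP _ h)
  | AltFalse _ => 1
  end.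

(* A section of phi is psi : S_8 -> Sym(stickers), which moves the stickers of
   corner position c to position s c, keeping the axis of each sticker unless
   s moves c between the two tetrahedra inscribed in the cube, in which case
   the x and z stickers are exchanged.  Up to a fixed relabelling of the
   stickers (exchange x and z on one tetrahedron) this is the plain action of
   S_8 on corner positions, so psi is a homomorphism, and phi (psi s) = s.
   Its image lies in G_2 because S_8 is generated by the transpositions
   (0 j), and each psi (0 j) is an explicit sequence of face turns. *)
From mathcomp Require Import all_boot all_fingroup.
Set Implicit Arguments. Unset Strict Implicit. Unset Printing Implicit Defensive.
Local Open Scope group_scope.

Lemma morphim_section (aT rT : finGroupType) (D : {group aT})
    (psi : {morphism D >-> rT}) (phi : rT -> aT) :
    {in D, cancel psi phi} ->
  [/\ {in psi @* D &, {morph phi : x y / x * y}},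
      {in psi @* D &, injective phi} &
      phi @: (psi @* D) = D].
Proof.
move=> psiK; split.
- move=> _ _ /morphimP[a Da _ ->] /morphimP[b Db _ ->].
  by rewrite -morphM // !psiK ?groupM.
- move=> _ _ /morphimP[a Da _ ->] /morphimP[b Db _ ->].
  by rewrite !psiK // => ->.
- apply/setP => s; apply/imsetP/idP => [[_ /morphimP[a Da _ ->] ->]|Ds].
    by rewrite psiK.
  by exists (psi s); rewrite ?mem_morphim ?psiK.
Qed.

Lemma phiE (g : {perm sticker}) (s : {perm corner}) :
  phi_fun g =1 s -> phi g = s.
Proof.
move=> gs; rewrite /phi; destruct boolP as [inj_g|not_inj_g].
  by apply/permP => c; rewrite permE gs.
by case/negP: not_inj_g; apply/injectiveP => c d; rewrite !gs => /perm_inj.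
Qed.

(* The parity of right + back + bottom: it tells which of the two tetrahedra
   inscribed in the cube contains the corner position. *)
Definition corner_parity (c : corner) : bool :=
  odd c (+) odd (c %/ 2) (+) (3 < c).

(* On 'I_3, rev_ord exchanges the x and z axes and fixes y. *)
Definition psi_fun (s : corner -> corner) (x : sticker) : sticker :=
  let: (c, k) := x in
  (s c, if corner_parity c == corner_parity (s c) then k else rev_ord k).

Lemma psi_fun_inj (s : {perm corner}) : injective (psi_fun s).
Proof.
case=> c k [d l] [/perm_inj <-]; case: eqP => _; first by move->.
by move/(congr1 (@rev_ord 3)); rewrite !rev_ordK => ->.
Qed.

Definition psi (s : {perm corner}) : {perm sticker} := perm (@psi_fun_inj s).

Lemma psiM : {morph psi : s t / s * t}.
Proof.
move=> s t; apply/permP => -[c k]; rewrite permM !permE /= permM.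
by case: (corner_parity c); case: (corner_parity (s c));
  case: (corner_parity (t (s c))); rewrite /= ?rev_ordK.
Qed.

Canonical psi_morphism := @Morphism _ _ [set: {perm corner}] psi (in2W psiM).

Lemma psiK : cancel psi phi.
Proof. by move=> s; apply: phiE => c; rewrite /phi_fun permE. Qed.

Inductive face := U | D | F | B | L | R.

Definition face_turn (f : face) : 'I_3 * bool :=
  match f with
  | U => (ax_y, true) | D => (ax_y, false) | F => (ax_z, true)
  | B => (ax_z, false) | L => (ax_x, false) | R => (ax_x, true)
  end.

Definition face_move (f : face) : {perm sticker} :=
  turn (face_turn f).1 (face_turn f).2.

Lemma face_move_G2 f : face_move f \in G2.
Proof. by apply: mem_gen; case: f; rewrite !inE eqxx ?orbT. Qed.

Definition word_move (w : seq face) : {perm sticker} :=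
  \prod_(f <- w) face_move f.

Definition word_fun (w : seq face) (x : sticker) : sticker :=
  foldl (fun y f => turn_fun (face_turn f).1 (face_turn f).2 y) x w.

Lemma word_moveE w x : word_move w x = word_fun w x.
Proof.
elim: w x => [|f w IHw] x; first by rewrite /word_move big_nil perm1.
by rewrite /word_move big_cons permM -/(word_move w) IHw /= permE.
Qed.

Lemma word_move_G2 w : word_move w \in G2.
Proof. by rewrite group_prod // => f _; exact: face_move_G2. Qed.

(* Found by computer search; the turns are performed from left to right. *)
Definition star_word (j : corner) : seq face := nth [::] [:: [::];
  [:: R; R; F; F; U; R; R; U; U; U; F; F; U; R; R; U; U; U; R; R; U];
  [:: R; R; U; R; R; F; F; U; R; R; F; F; U; R; R; F; F; U; F; F; U; U; U];
  [:: R; R; U; U; F; F; U; F; F; U; U; R; R; U; F; F; U; U; R; R; U];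
  [:: U; F; F; U; F; F; U; U; R; R; U; R; R; U; U; F; F; U; R; R; U];
  [:: R; R; U; R; R; U; U; F; F; U; R; R; U; U; F; F; U; F; F; U; U];
  [:: U; U; R; R; U; F; F; U; U; R; R; U; F; F; U; U; L; L; D; B; B];
  [:: R; R; U; R; R; U; U; U; F; F; U; R; R; F; F; U; R; R; F; F; U; F; F]] j.

Definition swap0 (j c : corner) : corner :=
  if c == ord0 then j else if c == j then ord0 else c.

Lemma tperm0E (j : corner) : tperm ord0 j =1 swap0 j.
Proof. by move=> c; rewrite permE. Qed.

(* tperm and the product of perms do not reduce under vm_compute, so the check
   is stated with swap0, word_fun and explicit lists of indices. *)
Lemma star_word_correct : all (fun j => all (fun x =>
    psi_fun (swap0 (ordm 7 j)) x == word_fun (star_word (ordm 7 j)) x)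
  sticker_list) (iota 0 8).
Proof. by vm_compute. Qed.

Lemma ordmK n (i : 'I_n.+1) : ordm n i = i.
Proof. by apply: val_inj; rewrite /= modn_small. Qed.

Lemma mem_sticker_list (x : sticker) : x \in sticker_list.
Proof.
case: x => c k; apply/allpairsP; exists (val c, val k).
by rewrite !mem_iota /= !ltn_ord !ordmK.
Qed.

Lemma psi_tperm0 (j : corner) : psi (tperm ord0 j) = word_move (star_word j).
Proof.
have j8 : val j \in iota 0 8 by rewrite mem_iota ltn_ord.
apply/permP => x; rewrite word_moveE.
have /allP/(_ _ j8)/allP/(_ x (mem_sticker_list x)) := star_word_correct.
by rewrite !ordmK => /eqP <-; case: x => c k; rewrite permE /= tperm0E.
Qed.

Lemma psi_sub_G2 : psi @* [set: {perm corner}] \subset G2.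
Proof.
have -> : psi @* [set: {perm corner}] =
          psi @* <<[set tperm ord0 j | j : corner]>> by rewrite gen_tperm.
rewrite morphim_gen ?subsetT // gen_subG.
apply/subsetP => _ /morphimP[_ _ /imsetP[j _ ->] ->].
by rewrite /= psi_tperm0 word_move_G2.
Qed.

Theorem proposition2p6 :
  exists H : {group {perm sticker}},
    [/\ H \subset G2,
        {in H &, {morph phi : x y / (x * y)%g}},
        {in H &, injective phi} &
        phi @: H = [set: {perm corner}]].
Proof.
exists (psi @* [set: {perm corner}])%G.
have [phiM phi_inj phi_onto] := morphim_section (in1W psiK).
by split=> //; exact: psi_sub_G2.
Qed.
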